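(* Let $n\ge1$, $q\in\mathbb{C}$ with $0<|q|<1$, and $0<r<\frac{1-|q|}{|1-q|}$. For every $\sigma\in\mathbb{S}_n$, $$\Big(\frac{1}{2\pi i}\Big)^n\oint_{\mathcal{C}_r}\cdots\oint_{\mathcal{C}_r}A_\sigma\prod_{i=1}^n z_i^{-1}\,dz_1\cdots dz_n=q^{\mathrm{inv}(\sigma)},$$ where $\mathrm{inv}(\sigma)$ is the number of inversions of $\sigma$.
   Context: $\mathcal{C}_r$ is the positively oriented circle of radius $r$ centered at $0$. For $1\le\alpha<\beta\le n$ put $S_{\beta\alpha}=-\dfrac{z_\beta-qz_\alpha-(1-q)z_\alpha z_\beta}{z_\alpha-qz_\beta-(1-q)z_\alpha z_\beta}$. An inversion of $\sigma\in\mathbb{S}_n$ is a pair $(\alpha,\beta)$ with $1\le\alpha<\beta\le n$ and $\sigma^{-1}(\beta)<\sigma^{-1}(\alpha)$. $A_\sigma=\prod_{(\alpha,\beta)\text{ inversion of }\sigma}S_{\beta\alpha}$. *)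

From Stdlib Require Import Reals Lra List Permutation Arith.
Import ListNotations.
Open Scope R_scope.

Definition Cx : Type := (R * R)%type.
Definition RC (x : R) : Cx := (x, 0).
Definition Czero : Cx := (0, 0).
Definition Cone : Cx := (1, 0).
Definition Ci : Cx := (0, 1).
Definition Cadd (z w : Cx) : Cx := (fst z + fst w, snd z + snd w).
Definition Copp (z : Cx) : Cx := (- fst z, - snd z).
Definition Csub (z w : Cx) : Cx := Cadd z (Copp w).
Definition Cmul (z w : Cx) : Cx :=
  (fst z * fst w - snd z * snd w, fst z * snd w + snd z * fst w).
Definition Cinv (z : Cx) : Cx :=
  (fst z / (fst z ^ 2 + snd z ^ 2), - snd z / (fst z ^ 2 + snd z ^ 2)).
Definition Cdiv (z w : Cx) : Cx := Cmul z (Cinv w).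
Fixpoint Cpow (z : Cx) (n : nat) : Cx :=
  match n with O => Cone | S k => Cmul z (Cpow z k) end.
Definition Cnorm (z : Cx) : R := sqrt (fst z ^ 2 + snd z ^ 2).

Definition circ (r theta : R) : Cx := (r * cos theta, r * sin theta).

Definition Cprod (l : list nat) (f : nat -> Cx) : Cx :=
  fold_right (fun k acc => Cmul (f k) acc) Cone l.

Definition RInt_val (f : R -> R) (a b v : R) : Prop :=
  exists pr : Riemann_integrable f a b, RiemannInt pr = v.

(* v = \oint_{C_r} h(z) dz, with the positive parametrisation
   z = r e^{i theta}, theta in [0, 2 pi], dz = i r e^{i theta} d theta *)
Definition CircInt (r : R) (h : Cx -> Cx) (v : Cx) : Prop :=
  RInt_val (fun t => fst (Cmul (h (circ r t)) (Cmul Ci (circ r t)))) 0 (2 * PI) (fst v) /\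
  RInt_val (fun t => snd (Cmul (h (circ r t)) (Cmul Ci (circ r t)))) 0 (2 * PI) (snd v).

Definition cons_fun (w : Cx) (z : nat -> Cx) : nat -> Cx :=
  fun k => match k with O => w | S k' => z k' end.

(* IterCirc r n F v : v = \oint_{C_r} ... \oint_{C_r} F(z_0,...,z_{n-1}) dz ... dz
   (iterated; variable z_0 outermost).  Variables with index >= n are unused. *)
Fixpoint IterCirc (r : R) (n : nat) (F : (nat -> Cx) -> Cx) (v : Cx) : Prop :=
  match n with
  | O => F (fun _ => Czero) = v
  | S m => exists g : Cx -> Cx,
      (forall t : R, IterCirc r m (fun z => F (cons_fun (circ r t) z)) (g (circ r t))) /\
      CircInt r g v
  end.

(* sigma in S_n is given in one-line notation as a list [sigma(0); ...; sigma(n-1)]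
   (indices shifted to 0..n-1); sigma^{-1}(b) is the position of b in that list. *)
Fixpoint pos (b : nat) (l : list nat) : nat :=
  match l with
  | [] => O
  | x :: l' => if Nat.eqb x b then O else S (pos b l')
  end.

Definition is_inversion (sigma : list nat) (a b : nat) : bool :=
  Nat.ltb a b && Nat.ltb (pos b sigma) (pos a sigma).

Definition inv_count (n : nat) (sigma : list nat) : nat :=
  fold_right Nat.add O
    (map (fun a => fold_right Nat.add O
        (map (fun b => if is_inversion sigma a b then 1%nat else 0%nat) (seq 0 n)))
      (seq 0 n)).

Definition Sba (q : Cx) (z : nat -> Cx) (b a : nat) : Cx :=
  Copp (Cdiv (Csub (Csub (z b) (Cmul q (z a))) (Cmul (Csub Cone q) (Cmul (z a) (z b))))
             (Csub (Csub (z a) (Cmul q (z b))) (Cmul (Csub Cone q) (Cmul (z a) (z b))))).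

Definition A_sigma (n : nat) (q : Cx) (sigma : list nat) (z : nat -> Cx) : Cx :=
  Cprod (seq 0 n) (fun a => Cprod (seq 0 n) (fun b =>
    if is_inversion sigma a b then Sba q z b a else Cone)).

(* Every inversion (a,b) of σ has a < b, so A_σ is a "strictly upper
   triangular" product of factors S_{b a}(z_a, z_b).  Integrating the last
   variable z_m first (it is the innermost integral), the integrand factors as
     [the same integrand for z_0 .. z_{m-1}] · P(z_m) / z_m,
   where P(w) = ∏_{(a,m) inversion} S_{m a}(z_a, w).  When |z_a| = r, the
   denominator of S_{m a}(z_a, w) does not vanish on the disc |w| < r/κ with
   κ = |q| + |1-q| r < 1, so P is holomorphic there, and P(0) = q^{#(a,m)}.
   The Cauchy formula at the centre, ∮_{C_r} P(w)/w dw = 2πi P(0), integrates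
   z_m out, and induction on the number of variables gives (2πi)^n q^{inv σ}.  *)

From Coquelicot Require Import Coquelicot.
From Stdlib Require Import Reals Lra Lia List Permutation FunctionalExtensionality.
Import ListNotations.
Open Scope R_scope.

Lemma Cx_ring_theory : ring_theory Czero Cone Cadd Cmul Csub Copp (@eq Cx).
Proof.
  split; intros; repeat match goal with z : Cx |- _ => destruct z end;
    unfold Csub, Cadd, Cmul, Copp, Czero, Cone; cbn [fst snd]; f_equal; ring.
Qed.

Lemma sqnorm_neq0 (z : Cx) : z <> Czero -> fst z ^ 2 + snd z ^ 2 <> 0.
Proof. destruct z as [a b]; intros Hz E; apply Hz; unfold Czero; cbn in E; f_equal; nra. Qed.

Lemma Cx_field_theory : field_theory Czero Cone Cadd Cmul Csub Copp Cdiv Cinv (@eq Cx).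
Proof.
  split.
  - exact Cx_ring_theory.
  - unfold Cone, Czero; intros E; injection E; lra.
  - reflexivity.
  - intros [a b] Hz. apply sqnorm_neq0 in Hz; cbn [fst snd] in Hz.
    unfold Cmul, Cinv, Cone; cbn [fst snd]. f_equal; field; exact Hz.
Qed.

Add Field Cx_field : Cx_field_theory.

Notation two_pi_i := (Cmul (RC (2 * PI)) Ci).

(* Cx and Cnorm coincide with Coquelicot's complex numbers and modulus. *)
Lemma Cnorm_mul (a b : Cx) : Cnorm (Cmul a b) = Cnorm a * Cnorm b.
Proof. exact (Cmod_mult a b). Qed.

Lemma Cnorm_add_le (a b : Cx) : Cnorm (Cadd a b) <= Cnorm a + Cnorm b.
Proof. exact (Cmod_triangle a b). Qed.

Lemma Cnorm_ge0 (a : Cx) : 0 <= Cnorm a.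
Proof. exact (Cmod_ge_0 a). Qed.

Lemma Cnorm_one : Cnorm Cone = 1.
Proof. exact Cmod_1. Qed.

Lemma Cnorm_pos_neq0 (z : Cx) : 0 < Cnorm z -> z <> Czero.
Proof. intros H ->. unfold Cnorm, Czero in H; cbn in H. rewrite Rmult_0_l, Rplus_0_l, sqrt_0 in H. lra. Qed.

Lemma Cprod_app l1 l2 f : Cprod (l1 ++ l2) f = Cmul (Cprod l1 f) (Cprod l2 f).
Proof. induction l1 as [|a l1 IH]; simpl; rewrite ?IH; ring. Qed.

Lemma Cprod_mul l f g : Cprod l (fun a => Cmul (f a) (g a)) = Cmul (Cprod l f) (Cprod l g).
Proof. induction l as [|a l IH]; simpl; rewrite ?IH; ring. Qed.

Lemma Cprod_ext_in l f g : (forall a, In a l -> f a = g a) -> Cprod l f = Cprod l g.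
Proof. induction l as [|a l IH]; simpl; intros H; rewrite ?H, ?IH; auto. Qed.

Lemma Cprod_one l f : (forall a, In a l -> f a = Cone) -> Cprod l f = Cone.
Proof. induction l as [|a l IH]; simpl; intros H; rewrite ?H, ?IH; auto; ring. Qed.

Lemma Cpow_add z a b : Cpow z (a + b) = Cmul (Cpow z a) (Cpow z b).
Proof. induction a as [|a IH]; simpl; rewrite ?IH; ring. Qed.

Lemma Cpow_mul a b n : Cmul (Cpow a n) (Cpow b n) = Cpow (Cmul a b) n.
Proof. induction n as [|n IH]; simpl; rewrite <- ?IH; ring. Qed.

Lemma Cpow_one n : Cpow Cone n = Cone.
Proof. induction n as [|n IH]; simpl; rewrite ?IH; ring. Qed.

Lemma Cprod_pow z l (g : nat -> nat) :
  Cprod l (fun a => Cpow z (g a)) = Cpow z (fold_right Nat.add O (map g l)).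
Proof. induction l as [|a l IH]; simpl; rewrite ?IH, ?Cpow_add; auto. Qed.

Lemma circ_sqnorm r t : fst (circ r t) ^ 2 + snd (circ r t) ^ 2 = r ^ 2.
Proof. unfold circ; cbn [fst snd]. pose proof (sin2_cos2 t) as E. unfold Rsqr in E. nra. Qed.

Lemma Cnorm_circ s t : Cnorm (circ s t) = Rabs s.
Proof. unfold Cnorm. rewrite circ_sqnorm, <- Rsqr_pow2. apply sqrt_Rsqr_abs. Qed.

Lemma circ_neq0 r t : r <> 0 -> circ r t <> Czero.
Proof. intros Hr. apply Cnorm_pos_neq0. rewrite Cnorm_circ. now apply Rabs_pos_lt. Qed.

Lemma circ_0 t : circ 0 t = Czero.
Proof. unfold circ, Czero; f_equal; ring. Qed.

Lemma circ_2PI s : circ s (2 * PI) = circ s 0.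
Proof. unfold circ; rewrite cos_2PI, sin_2PI, cos_0, sin_0; reflexivity. Qed.

Lemma der_add (f g : R -> R) (x a b : R) :
  is_derive f x a -> is_derive g x b -> is_derive (fun y => f y + g y) x (a + b).
Proof. rewrite !is_derive_Reals. apply derivable_pt_lim_plus. Qed.

Lemma der_sub (f g : R -> R) (x a b : R) :
  is_derive f x a -> is_derive g x b -> is_derive (fun y => f y - g y) x (a - b).
Proof. rewrite !is_derive_Reals. apply derivable_pt_lim_minus. Qed.

Lemma der_mul (f g : R -> R) (x a b : R) : is_derive f x a -> is_derive g x b ->
  is_derive (fun y => f y * g y) x (a * g x + f x * b).
Proof. rewrite !is_derive_Reals. apply derivable_pt_lim_mult. Qed.

Lemma der_opp (f : R -> R) (x a : R) : is_derive f x a -> is_derive (fun y => - f y) x (- a).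
Proof. rewrite !is_derive_Reals. apply derivable_pt_lim_opp. Qed.

Lemma der_const (c x : R) : is_derive (fun _ : R => c) x 0.
Proof. apply is_derive_Reals, derivable_pt_lim_const. Qed.

Lemma der_id (x : R) : is_derive (fun y : R => y) x 1.
Proof. apply is_derive_Reals, derivable_pt_lim_id. Qed.

Lemma der_cos (x : R) : is_derive cos x (- sin x).
Proof. apply is_derive_Reals, derivable_pt_lim_cos. Qed.

Lemma der_sin (x : R) : is_derive sin x (cos x).
Proof. apply is_derive_Reals, derivable_pt_lim_sin. Qed.

Lemma der_eq (f : R -> R) (x a b : R) : is_derive f x a -> a = b -> is_derive f x b.
Proof. intros H <-; exact H. Qed.

Lemma der_div_sqnorm (Z X Y : R -> R) (x c a b : R) :
  is_derive Z x c -> is_derive X x a -> is_derive Y x b -> X x ^ 2 + Y x ^ 2 <> 0 ->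
  is_derive (fun u => Z u / (X u ^ 2 + Y u ^ 2)) x
    ((c * (X x ^ 2 + Y x ^ 2) - Z x * (2 * X x * a + 2 * Y x * b)) / (X x ^ 2 + Y x ^ 2) ^ 2).
Proof.
  intros HZ HX HY HN.
  assert (HN' : is_derive (fun u => X u ^ 2 + Y u ^ 2) x (2 * X x * a + 2 * Y x * b)).
  { apply (is_derive_ext (fun u => X u * X u + Y u * Y u)); 
      [intros u; change (X u * X u + Y u * Y u = X u ^ 2 + Y u ^ 2); ring|].
    eapply der_eq; [apply der_add; apply der_mul; eauto | ring]. }
  eapply der_eq; [apply der_mul; [exact HZ | apply is_derive_inv; [exact HN' | exact HN]]|].
  cbv beta. field. exact HN.
Qed.

Ltac derive_step :=
  lazymatch goal with
  | |- is_derive (fun y => @?f y + @?g y) _ _ => apply der_add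
  | |- is_derive (fun y => @?f y - @?g y) _ _ => apply der_sub
  | |- is_derive (fun y => @?f y * @?g y) _ _ => apply der_mul
  | |- is_derive (fun y => - @?f y) _ _ => apply der_opp
  | |- is_derive (fun y => y) _ _ => apply der_id
  | |- is_derive cos _ _ => apply der_cos
  | |- is_derive sin _ _ => apply der_sin
  | |- _ => first [eassumption | apply der_const]
  end.

Ltac solve_derive := eapply der_eq; [repeat derive_step | cbv beta; ring].

Lemma continuity_2d_cos s t : continuity_2d_pt (fun _ v => cos v) s t.
Proof. apply (continuity_1d_2d_pt_comp cos (fun _ v => v)); [apply continuity_cos | apply continuity_2d_pt_id2]. Qed.

Lemma continuity_2d_sin s t : continuity_2d_pt (fun _ v => sin v) s t.
Proof. apply (continuity_1d_2d_pt_comp sin (fun _ v => v)); [apply continuity_sin | apply continuity_2d_pt_id2]. Qed.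

Ltac cont2_step :=
  lazymatch goal with
  | |- continuity_2d_pt (fun u v => @?f u v + @?g u v) _ _ => apply continuity_2d_pt_plus
  | |- continuity_2d_pt (fun u v => @?f u v - @?g u v) _ _ => apply continuity_2d_pt_minus
  | |- continuity_2d_pt (fun u v => @?f u v * @?g u v) _ _ => apply continuity_2d_pt_mult
  | |- continuity_2d_pt (fun u v => - @?f u v) _ _ => apply continuity_2d_pt_opp
  | |- continuity_2d_pt (fun u v => / @?f u v) _ _ => apply continuity_2d_pt_inv
  | |- continuity_2d_pt (fun u v => @?f u v ^ S _) _ _ => apply continuity_2d_pt_mult
  | |- continuity_2d_pt (fun u v => u) _ _ => apply continuity_2d_pt_id1
  | |- continuity_2d_pt (fun u v => cos v) _ _ => apply continuity_2d_cos
  | |- continuity_2d_pt (fun u v => sin v) _ _ => apply continuity_2d_sin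
  | |- continuity_2d_pt _ _ _ => first [assumption | apply continuity_2d_pt_const]
  | |- _ => assumption
  end.

Ltac solve_cont2 := unfold Rdiv; repeat cont2_step.

(* This is what holomorphy means in polar coordinates. *)
Record polar_cr_at (P : Cx -> Cx) (D : R -> R -> Cx) (s t : R) : Prop := {
  cr_rad_re : is_derive (fun u => fst (P (circ u t))) s (fst (D s t));
  cr_rad_im : is_derive (fun u => snd (P (circ u t))) s (snd (D s t));
  cr_ang_re : is_derive (fun v => fst (P (circ s v))) t (- s * snd (D s t));
  cr_ang_im : is_derive (fun v => snd (P (circ s v))) t (s * fst (D s t));
  cr_D_re : continuity_2d_pt (fun u v => fst (D u v)) s t;
  cr_D_im : continuity_2d_pt (fun u v => snd (D u v)) s t;
  cr_P_re : continuity_2d_pt (fun u v => fst (P (circ u v))) s t;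
  cr_P_im : continuity_2d_pt (fun u v => snd (P (circ u v))) s t }.

Definition PolarCR (R0 : R) (P : Cx -> Cx) (D : R -> R -> Cx) : Prop :=
  forall s t, Rabs s < R0 -> polar_cr_at P D s t.

Definition Holo (R0 : R) (P : Cx -> Cx) : Prop := exists D, PolarCR R0 P D.

Lemma holo_const R0 c : Holo R0 (fun _ => c).
Proof.
  exists (fun _ _ => Czero). intros s t _. unfold Czero.
  split; cbn [fst snd]; solve [solve_derive | solve_cont2].
Qed.

Lemma holo_id R0 : Holo R0 (fun w => w).
Proof.
  exists (fun _ v => (cos v, sin v)). intros s t _.
  split; unfold circ; cbn [fst snd]; solve [solve_derive | solve_cont2].
Qed.

Lemma holo_add R0 P1 P2 :
  Holo R0 P1 -> Holo R0 P2 -> Holo R0 (fun w => Cadd (P1 w) (P2 w)).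
Proof.
  intros [D1 H1] [D2 H2]. exists (fun u v => Cadd (D1 u v) (D2 u v)).
  intros s t Hs. destruct (H1 s t Hs), (H2 s t Hs). unfold Cadd.
  split; cbn [fst snd]; solve [solve_derive | solve_cont2].
Qed.

Lemma holo_opp R0 P : Holo R0 P -> Holo R0 (fun w => Copp (P w)).
Proof.
  intros [D H]. exists (fun u v => Copp (D u v)).
  intros s t Hs. destruct (H s t Hs). unfold Copp.
  split; cbn [fst snd]; solve [solve_derive | solve_cont2].
Qed.

Lemma holo_mul R0 P1 P2 :
  Holo R0 P1 -> Holo R0 P2 -> Holo R0 (fun w => Cmul (P1 w) (P2 w)).
Proof.
  intros [D1 H1] [D2 H2].
  exists (fun u v => Cadd (Cmul (D1 u v) (P2 (circ u v))) (Cmul (P1 (circ u v)) (D2 u v))).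
  intros s t Hs. destruct (H1 s t Hs), (H2 s t Hs). unfold Cadd, Cmul.
  split; cbn [fst snd]; solve [solve_derive | solve_cont2].
Qed.

Lemma holo_inv R0 P : Holo R0 P ->
  (forall s t, Rabs s < R0 -> P (circ s t) <> Czero) -> Holo R0 (fun w => Cinv (P w)).
Proof.
  intros [D H] HP.
  exists (fun u v => Copp (Cmul (D u v) (Cmul (Cinv (P (circ u v))) (Cinv (P (circ u v)))))).
  intros s t Hs. destruct (H s t Hs). pose proof (sqnorm_neq0 _ (HP s t Hs)) as HN.
  unfold Copp, Cmul, Cinv; split; cbn [fst snd]; try solve [solve_cont2].
  - eapply der_eq; [apply (der_div_sqnorm (fun u => fst (P (circ u t))) (fun u => fst (P (circ u t)))
                                         (fun u => snd (P (circ u t)))); eauto | field; exact HN].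
  - eapply der_eq; [apply (der_div_sqnorm (fun u => - snd (P (circ u t))) (fun u => fst (P (circ u t)))
                                         (fun u => snd (P (circ u t)))); eauto using der_opp | field; exact HN].
  - eapply der_eq; [apply (der_div_sqnorm (fun v => fst (P (circ s v))) (fun v => fst (P (circ s v)))
                                         (fun v => snd (P (circ s v)))); eauto | field; exact HN].
  - eapply der_eq; [apply (der_div_sqnorm (fun v => - snd (P (circ s v))) (fun v => fst (P (circ s v)))
                                         (fun v => snd (P (circ s v)))); eauto using der_opp | field; exact HN].
Qed.

Lemma locally_in_interval (x R0 : R) (Q : R -> Prop) :
  Rabs x < R0 -> (forall y, Rabs y < R0 -> Q y) -> locally x Q.
Proof.
  intros Hx HQ. assert (He : 0 < R0 - Rabs x) by lra.
  exists (mkposreal _ He). change (forall y : R, Rabs (y - x) < R0 - Rabs x -> Q y).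
  intros y Hy. apply HQ. pose proof (Rabs_triang_inv y x). lra.
Qed.

Lemma continuity_2d_pt_snd (f : R -> R -> R) s t :
  continuity_2d_pt f s t -> continuous (fun v => f s v) t.
Proof.
  intros H. apply continuity_pt_filterlim. intros eps Heps.
  destruct (H (mkposreal eps Heps)) as [d Hd]. exists d; split; [apply cond_pos|].
  intros x [_ Hx]. apply Hd; [|exact Hx]. rewrite Rminus_diag, Rabs_R0. apply cond_pos.
Qed.

Lemma derivable_continuity_pt (f : R -> R) (x a : R) : is_derive f x a -> continuity_pt f x.
Proof. intros H. apply continuity_pt_filterlim, (ex_derive_continuous f x). now exists a. Qed.

Lemma RInt_val_of (f : R -> R) a b v : is_RInt f a b v -> RInt_val f a b v.
Proof.
  intros H. exists (ex_RInt_Reals_0 _ _ _ (ex_intro _ _ H)).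
  rewrite <- RInt_Reals. now apply is_RInt_unique.
Qed.

Lemma is_RInt_ext_R (f g : R -> R) (a b v : R) :
  (forall t, f t = g t) -> is_RInt f a b v -> is_RInt g a b v.
Proof. intros E H. apply (is_RInt_ext f); auto. Qed.

Lemma is_RInt_lin (f g : R -> R) a b A B c1 c2 :
  is_RInt f a b A -> is_RInt g a b B ->
  is_RInt (fun t => c1 * f t + c2 * g t) a b (c1 * A + c2 * B).
Proof.
  intros HA HB. apply (is_RInt_plus (fun t => c1 * f t) (fun t => c2 * g t)).
  - exact (is_RInt_scal f a b c1 A HA).
  - exact (is_RInt_scal g a b c2 B HB).
Qed.

(* Mean value property of the real part, for fixed polar Cauchy–Riemann data:
   the average of Re P over the circle of radius s has derivative the average
   of Re D, which vanishes because s Re D is the angular derivative of the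
   periodic function Im P(s e^{it}). *)
Section MeanValue.

Variables (R0 : R) (P : Cx -> Cx) (D : R -> R -> Cx).
Hypothesis HP : PolarCR R0 P D.

Lemma circle_re_integrable s :
  Rabs s < R0 -> ex_RInt (fun t => fst (P (circ s t))) 0 (2 * PI).
Proof.
  intros Hs. apply (ex_RInt_continuous (V := R_CompleteNormedModule)). intros t _.
  apply continuity_pt_filterlim. exact (derivable_continuity_pt _ _ _ (cr_ang_re _ _ _ _ (HP s t Hs))).
Qed.

Lemma circle_re_average_derive s : Rabs s < R0 ->
  is_derive (fun u => RInt (fun t => fst (P (circ u t))) 0 (2 * PI)) s
            (RInt (fun t => fst (D s t)) 0 (2 * PI)).
Proof.
  intros Hs. eapply der_eq; [apply is_derive_RInt_param|].
  - apply (locally_in_interval s R0); auto. intros y Hy t _.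
    exists (fst (D y t)). exact (cr_rad_re _ _ _ _ (HP y t Hy)).
  - intros t _. apply continuity_2d_pt_ext_loc with (f := fun u v => fst (D u v)).
    + assert (He : 0 < R0 - Rabs s) by lra. exists (mkposreal _ He). intros u v Hu _.
      assert (Hu' : Rabs u < R0) by (pose proof (Rabs_triang_inv u s); simpl in Hu; lra).
      symmetry. apply is_derive_unique, (cr_rad_re _ _ _ _ (HP u v Hu')).
    + exact (cr_D_re _ _ _ _ (HP s t Hs)).
  - apply (locally_in_interval s R0); auto using circle_re_integrable.
  - apply RInt_ext. intros t _. apply is_derive_unique, (cr_rad_re _ _ _ _ (HP s t Hs)).
Qed.

Lemma radial_re_average_zero s : 0 < s < R0 -> RInt (fun t => fst (D s t)) 0 (2 * PI) = 0.
Proof.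
  intros Hs. assert (Hs' : Rabs s < R0) by (rewrite Rabs_right; lra).
  assert (Hper : is_RInt (fun v => s * fst (D s v)) 0 (2 * PI)
                   (minus (snd (P (circ s (2 * PI)))) (snd (P (circ s 0))))).
  { apply (is_RInt_derive (fun v => snd (P (circ s v)))).
    - intros v _. exact (cr_ang_im _ _ _ _ (HP s v Hs')).
    - intros v _. apply (continuity_2d_pt_snd (fun u v => s * fst (D u v))).
      apply continuity_2d_pt_mult; [apply continuity_2d_pt_const | exact (cr_D_re _ _ _ _ (HP s v Hs'))]. }
  rewrite circ_2PI, minus_eq_zero in Hper.
  apply (is_RInt_scal _ _ _ (/ s)) in Hper.
  assert (HD : is_RInt (fun v => fst (D s v)) 0 (2 * PI) (/ s * 0)).
  { eapply is_RInt_ext; [|exact Hper].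
    intros v _. change (/ s * (s * fst (D s v)) = fst (D s v)). field. lra. }
  rewrite (is_RInt_unique _ _ _ _ HD). apply Rmult_0_r.
Qed.

Lemma mean_value_re_data r : 0 < r < R0 ->
  is_RInt (fun t => fst (P (circ r t))) 0 (2 * PI) (2 * PI * fst (P Czero)).
Proof.
  intros Hr.
  set (avg := fun u => RInt (fun t => fst (P (circ u t))) 0 (2 * PI)).
  assert (Hconst : avg r = avg 0).
  { destruct (MVT_gen avg 0 r (fun _ => 0)) as [c [_ Hc]]; [| |lra].
    - rewrite Rmin_left, Rmax_right by lra. intros x Hx.
      rewrite <- (radial_re_average_zero x) by lra.
      apply circle_re_average_derive. rewrite Rabs_right; lra.
    - rewrite Rmin_left, Rmax_right by lra. intros x Hx.
      eapply derivable_continuity_pt, circle_re_average_derive. rewrite Rabs_right; lra. }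
  assert (Hcentre : avg 0 = 2 * PI * fst (P Czero)).
  { unfold avg. rewrite (RInt_ext _ (fun _ => fst (P Czero))).
    - rewrite RInt_const. change ((2 * PI - 0) * fst (P Czero) = 2 * PI * fst (P Czero)). ring.
    - intros t _. now rewrite circ_0. }
  rewrite <- Hcentre, <- Hconst.
  apply (RInt_correct (V := R_CompleteNormedModule)), circle_re_integrable.
  rewrite Rabs_right; lra.
Qed.

End MeanValue.

Lemma mean_value_re R0 P r : Holo R0 P -> 0 < r < R0 ->
  is_RInt (fun t => fst (P (circ r t))) 0 (2 * PI) (2 * PI * fst (P Czero)).
Proof. intros [D HD]. exact (mean_value_re_data R0 P D HD r). Qed.

(* The imaginary part is the real part of - i P. *)
Lemma mean_value_im R0 P r : Holo R0 P -> 0 < r < R0 ->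
  is_RInt (fun t => snd (P (circ r t))) 0 (2 * PI) (2 * PI * snd (P Czero)).
Proof.
  intros HP Hr.
  assert (Hrot : Holo R0 (fun w => Cmul (0, -1) (P w))) by (apply holo_mul; auto using holo_const).
  pose proof (mean_value_re _ _ _ Hrot Hr) as H. cbn [fst snd Cmul] in H.
  replace (2 * PI * snd (P Czero)) with (2 * PI * (0 * fst (P Czero) - -1 * snd (P Czero))) by ring.
  eapply is_RInt_ext_R; [|exact H]. intros t; cbv beta. ring.
Qed.

(* On C_r,
   (K P(w) / w) dw = i K P(r e^{it}) dt, whose real and imaginary parts are
   combinations of Re P and Im P, so the mean value property applies. *)
Lemma cauchy_at_centre R0 P r K : Holo R0 P -> 0 < r < R0 ->
  CircInt r (fun w => Cmul K (Cmul (P w) (Cinv w))) (Cmul K (Cmul two_pi_i (P Czero))).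
Proof.
  intros HP Hr.
  pose proof (mean_value_re _ _ _ HP Hr) as Hre. pose proof (mean_value_im _ _ _ HP Hr) as Him.
  assert (E : forall t, Cmul (Cmul K (Cmul (P (circ r t)) (Cinv (circ r t)))) (Cmul Ci (circ r t))
                        = Cmul K (Cmul (P (circ r t)) Ci)).
  { intros t. field. apply circ_neq0. lra. }
  destruct K as [k1 k2]. split; apply RInt_val_of; eapply is_RInt_ext_R;
    try (intros t; rewrite E; reflexivity).
  - replace (fst _) with ((- k2) * (2 * PI * fst (P Czero)) + (- k1) * (2 * PI * snd (P Czero)))
      by (unfold Cmul, RC, Ci; cbn [fst snd]; ring).
    eapply is_RInt_ext_R; [|exact (is_RInt_lin _ _ _ _ _ _ _ _ Hre Him)].
    intros t; cbv beta. unfold Cmul, Ci; cbn [fst snd]. ring.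
  - replace (snd _) with (k1 * (2 * PI * fst (P Czero)) + (- k2) * (2 * PI * snd (P Czero)))
      by (unfold Cmul, RC, Ci; cbn [fst snd]; ring).
    eapply is_RInt_ext_R; [|exact (is_RInt_lin _ _ _ _ _ _ _ _ Hre Him)].
    intros t; cbv beta. unfold Cmul, Ci; cbn [fst snd]. ring.
Qed.

Definition setz (z : nat -> Cx) (m : nat) (w : Cx) : nat -> Cx :=
  fun k => if Nat.eqb k m then w else z k.

Lemma IterCirc_peel_last r m : 0 <= r -> forall (F G : (nat -> Cx) -> Cx) v,
  (forall z, (forall i, (i < m)%nat -> Cnorm (z i) = r) ->
             CircInt r (fun w => F (setz z m w)) (G z)) ->
  IterCirc r m G v -> IterCirc r (S m) F v.
Proof.
  intros Hr; induction m as [|m IH]; intros F G v HFG HG.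
  - exists (fun w => F (cons_fun w (fun _ => Czero))). split; [reflexivity|].
    simpl in HG; subst v.
    replace (fun w => F (cons_fun w (fun _ => Czero))) with (fun w => F (setz (fun _ => Czero) 0 w)).
    + apply HFG. intros; lia.
    + apply functional_extensionality; intros w. f_equal.
      apply functional_extensionality; intros [|k]; reflexivity.
  - destruct HG as [g [Hg Hc]]. exists g. split; [|exact Hc]. intros t.
    apply (IH _ (fun z => G (cons_fun (circ r t) z))); [|apply Hg].
    intros z Hz.
    replace (fun w => F (cons_fun (circ r t) (setz z m w)))
      with (fun w => F (setz (cons_fun (circ r t) z) (S m) w)).
    + apply HFG. intros [|i] Hi; simpl.
      * rewrite Cnorm_circ. apply Rabs_right; lra.
      * apply Hz; lia.
    + apply functional_extensionality; intros w. f_equal.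
      apply functional_extensionality; intros [|k]; reflexivity.
Qed.

Definition S_fun (q za w : Cx) : Cx :=
  Copp (Cdiv (Csub (Csub w (Cmul q za)) (Cmul (Csub Cone q) (Cmul za w)))
             (Csub (Csub za (Cmul q w)) (Cmul (Csub Cone q) (Cmul za w)))).

Definition S_den (q za w : Cx) : Cx := Csub (Csub za (Cmul q w)) (Cmul (Csub Cone q) (Cmul za w)).

(* S_den q za w = za - w (q + (1-q) za) cannot vanish when |w| (|q| + |1-q| |za|) < |za|. *)
Lemma S_den_neq0 q za w : Cnorm w * (Cnorm q + Cnorm (Csub Cone q) * Cnorm za) < Cnorm za ->
  S_den q za w <> Czero.
Proof.
  intros Hlt E.
  set (X := Cadd q (Cmul (Csub Cone q) za)).
  assert (Hza : za = Cmul w X).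
  { transitivity (Cadd (S_den q za w) (Cmul w X)); [unfold S_den, X; ring|].
    rewrite E. ring. }
  assert (HX : Cnorm X <= Cnorm q + Cnorm (Csub Cone q) * Cnorm za).
  { unfold X. rewrite <- Cnorm_mul. apply Cnorm_add_le. }
  assert (Hmul : Cnorm w * Cnorm X <= Cnorm w * (Cnorm q + Cnorm (Csub Cone q) * Cnorm za))
    by (apply Rmult_le_compat_l; [apply Cnorm_ge0 | exact HX]).
  assert (Hnorm : Cnorm za = Cnorm w * Cnorm X) by (rewrite Hza at 1; apply Cnorm_mul).
  lra.
Qed.

Lemma holo_S R0 q za : (forall w, Cnorm w < R0 -> S_den q za w <> Czero) -> Holo R0 (S_fun q za).
Proof.
  intros HN. unfold S_fun, Cdiv, Csub.
  apply holo_opp, holo_mul.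
  - repeat first [apply holo_add | apply holo_opp | apply holo_mul | apply holo_id | apply holo_const].
  - apply holo_inv.
    + repeat first [apply holo_add | apply holo_opp | apply holo_mul | apply holo_id | apply holo_const].
    + intros s t Hs. apply HN. now rewrite Cnorm_circ.
Qed.

Lemma S_at_0 q za : za <> Czero -> S_fun q za Czero = q.
Proof. intros Hza. unfold S_fun. field. exact Hza. Qed.

Definition tri_prod (I : nat -> nat -> bool) (m : nat) (f : nat -> nat -> Cx) : Cx :=
  Cprod (seq 0 m) (fun a => Cprod (seq 0 m) (fun b => if I a b then f a b else Cone)).

Definition strictly_upper (I : nat -> nat -> bool) : Prop :=
  forall a b, I a b = true -> (a < b)%nat.

Lemma tri_prod_ext I m f g : (forall a b, (a < m)%nat -> (b < m)%nat -> f a b = g a b) ->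
  tri_prod I m f = tri_prod I m g.
Proof.
  intros H. apply Cprod_ext_in; intros a Ha. apply Cprod_ext_in; intros b Hb.
  apply in_seq in Ha, Hb. destruct (I a b); [apply H; lia | reflexivity].
Qed.

Lemma tri_prod_succ I m f : strictly_upper I ->
  tri_prod I (S m) f =
  Cmul (tri_prod I m f) (Cprod (seq 0 m) (fun a => if I a m then f a m else Cone)).
Proof.
  intros HI.
  assert (Hlow : forall a b, (b <= a)%nat -> (if I a b then f a b else Cone) = Cone).
  { intros a b Hba. destruct (I a b) eqn:E; [apply HI in E; lia | reflexivity]. }
  unfold tri_prod. rewrite seq_S, Cprod_app. simpl (Cprod [0 + m]%nat _).
  rewrite (Cprod_one (seq 0 m ++ [m]) (fun b => if I m b then f m b else Cone)).
  2: { intros b Hb. apply Hlow. apply in_app_or in Hb as [Hb|[<-|[]]]; [apply in_seq in Hb|]; lia. }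
  rewrite (Cprod_ext_in _ _ (fun a => Cmul (Cprod (seq 0 m) (fun b => if I a b then f a b else Cone))
                                           (if I a m then f a m else Cone))).
  - rewrite Cprod_mul. ring.
  - intros a _. rewrite Cprod_app. simpl. ring.
Qed.

Definition integrand (q : Cx) (I : nat -> nat -> bool) (m : nat) (z : nat -> Cx) : Cx :=
  Cmul (tri_prod I m (fun a b => Sba q z b a)) (Cprod (seq 0 m) (fun i => Cinv (z i))).

Definition row_factor (q : Cx) (I : nat -> nat -> bool) (m : nat) (z : nat -> Cx) (w : Cx) : Cx :=
  Cprod (seq 0 m) (fun a => if I a m then S_fun q (z a) w else Cone).

Lemma integrand_succ q I m z w : strictly_upper I ->
  integrand q I (S m) (setz z m w) = Cmul (integrand q I m z) (Cmul (row_factor q I m z w) (Cinv w)).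
Proof.
  intros HI.
  assert (Hold : forall k, (k < m)%nat -> setz z m w k = z k).
  { intros k Hk. unfold setz. now replace (Nat.eqb k m) with false by (symmetry; apply Nat.eqb_neq; lia). }
  assert (Hnew : setz z m w m = w) by (unfold setz; now rewrite Nat.eqb_refl).
  unfold integrand, row_factor. rewrite tri_prod_succ by exact HI.
  rewrite (tri_prod_ext I m _ (fun a b => Sba q z b a)) by (intros a b Ha Hb; unfold Sba; rewrite !Hold by assumption; reflexivity).
  rewrite (Cprod_ext_in (seq 0 m) (fun a => if I a m then Sba q (setz z m w) m a else Cone)
                        (fun a => if I a m then S_fun q (z a) w else Cone)).
  2: { intros a Ha. apply in_seq in Ha. unfold Sba, S_fun. rewrite Hnew, Hold by lia. reflexivity. }
  rewrite seq_S, Cprod_app. simpl (Cprod [0 + m]%nat _). rewrite Hnew.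
  rewrite (Cprod_ext_in (seq 0 m) (fun i => Cinv (setz z m w i)) (fun i => Cinv (z i)))
    by (intros i Hi; apply in_seq in Hi; now rewrite Hold by lia).
  ring.
Qed.

Lemma holo_row_factor q I m z r R0 :
  (forall za w, Cnorm za = r -> Cnorm w < R0 -> S_den q za w <> Czero) ->
  (forall a, (a < m)%nat -> Cnorm (z a) = r) -> Holo R0 (row_factor q I m z).
Proof.
  intros HD Hz. unfold row_factor.
  assert (Hl : forall a, In a (seq 0 m) -> Cnorm (z a) = r) by (intros a Ha; apply in_seq in Ha; apply Hz; lia).
  induction (seq 0 m) as [|a l IH]; simpl.
  - apply holo_const.
  - apply holo_mul; [|apply IH; intros; apply Hl; simpl; auto].
    destruct (I a m); [|apply holo_const].
    apply holo_S. intros w Hw. apply HD; [apply Hl; simpl|]; auto.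
Qed.

Lemma row_factor_at_0 q I m z : (forall a, (a < m)%nat -> z a <> Czero) ->
  row_factor q I m z Czero = Cprod (seq 0 m) (fun a => if I a m then q else Cone).
Proof.
  intros Hz. apply Cprod_ext_in. intros a Ha. apply in_seq in Ha.
  destruct (I a m); [apply S_at_0, Hz; lia | reflexivity].
Qed.

Lemma integral_integrand q I r R0 : strictly_upper I -> 0 < r < R0 ->
  (forall za w, Cnorm za = r -> Cnorm w < R0 -> S_den q za w <> Czero) ->
  forall m c, IterCirc r m (fun z => Cmul c (integrand q I m z))
                         (Cmul c (Cmul (Cpow two_pi_i m) (tri_prod I m (fun _ _ => q)))).
Proof.
  intros HI Hr HD. induction m as [|m IH]; intros c; [reflexivity|].
  set (col := Cprod (seq 0 m) (fun a => if I a m then q else Cone)).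
  apply (IterCirc_peel_last r m ltac:(lra) _
           (fun z => Cmul (Cmul c (Cmul two_pi_i col)) (integrand q I m z))).
  - intros z Hz.
    replace (fun w => Cmul c (integrand q I (S m) (setz z m w)))
      with (fun w => Cmul (Cmul c (integrand q I m z)) (Cmul (row_factor q I m z w) (Cinv w)))
      by (apply functional_extensionality; intros w; rewrite integrand_succ by exact HI; ring).
    replace (Cmul (Cmul c (Cmul two_pi_i col)) (integrand q I m z))
      with (Cmul (Cmul c (integrand q I m z)) (Cmul two_pi_i (row_factor q I m z Czero))).
    + apply (cauchy_at_centre R0); [apply (holo_row_factor q I m z r R0)|]; auto.
    + rewrite row_factor_at_0; [fold col; ring|].
      intros a Ha. apply Cnorm_pos_neq0. rewrite Hz by exact Ha. lra.
  - replace (Cmul c (Cmul (Cpow two_pi_i (S m)) (tri_prod I (S m) (fun _ _ => q))))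
      with (Cmul (Cmul c (Cmul two_pi_i col)) (Cmul (Cpow two_pi_i m) (tri_prod I m (fun _ _ => q)))).
    + apply IH.
    + rewrite tri_prod_succ by exact HI. fold col. simpl Cpow. ring.
Qed.

Lemma two_pi_i_pow_cancel n : Cmul (Cpow (Cinv two_pi_i) n) (Cpow two_pi_i n) = Cone.
Proof.
  assert (HCi : Ci <> Czero) by (unfold Ci, Czero; intros E; injection E; lra).
  assert (H2pi : RC (2 * PI) <> Czero)
    by (unfold RC, Czero; intros E; injection E; pose proof PI_RGT_0; lra).
  rewrite Cpow_mul. replace (Cmul (Cinv two_pi_i) two_pi_i) with Cone by (field; split; assumption).
  apply Cpow_one.
Qed.

Lemma A_sigma_tri_prod n q sigma z :
  A_sigma n q sigma z = tri_prod (is_inversion sigma) n (fun a b => Sba q z b a).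
Proof. reflexivity. Qed.

Lemma inversions_strictly_upper sigma : strictly_upper (is_inversion sigma).
Proof. intros a b H. unfold is_inversion in H. apply andb_prop in H as [H _]. now apply Nat.ltb_lt. Qed.

Lemma tri_prod_inversions q n sigma :
  tri_prod (is_inversion sigma) n (fun _ _ => q) = Cpow q (inv_count n sigma).
Proof.
  unfold tri_prod, inv_count. rewrite <- Cprod_pow. apply Cprod_ext_in. intros a _.
  rewrite <- Cprod_pow. apply Cprod_ext_in. intros b _.
  destruct (is_inversion sigma a b); simpl; ring.
Qed.

(* The radius condition means κ := |q| + |1-q| r < 1, using |1-q| >= 1 - |q| > 0. *)
Lemma contraction_factor q r : 0 < Cnorm q -> Cnorm q < 1 -> 0 < r ->
  r < (1 - Cnorm q) / Cnorm (Csub Cone q) -> 0 < Cnorm q + Cnorm (Csub Cone q) * r < 1.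
Proof.
  intros Hq0 Hq1 Hr0 Hr1.
  assert (T : Cnorm Cone <= Cnorm (Csub Cone q) + Cnorm q).
  { replace Cone with (Cadd (Csub Cone q) q) at 1 by ring. apply Cnorm_add_le. }
  rewrite Cnorm_one in T.
  assert (Hp : 0 < Cnorm (Csub Cone q)) by lra.
  apply (Rmult_lt_compat_l (Cnorm (Csub Cone q))) in Hr1; [|exact Hp].
  replace (Cnorm (Csub Cone q) * ((1 - Cnorm q) / Cnorm (Csub Cone q))) with (1 - Cnorm q) in Hr1
    by (field; lra).
  split; nra.
Qed.

Theorem mainTheorem5 (n : nat) (q : Cx) (r : R) (sigma : list nat)
  (hn : (1 <= n)%nat)
  (hq0 : 0 < Cnorm q) (hq1 : Cnorm q < 1)
  (hr0 : 0 < r) (hr1 : r < (1 - Cnorm q) / Cnorm (Csub Cone q))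
  (hsigma : Permutation sigma (seq 0 n)) :
  exists v : Cx,
    IterCirc r n
      (fun z => Cmul (A_sigma n q sigma z) (Cprod (seq 0 n) (fun i => Cinv (z i)))) v /\
    Cmul (Cpow (Cinv (Cmul (RC (2 * PI)) Ci)) n) v = Cpow q (inv_count n sigma).
Proof.
  pose proof (contraction_factor q r hq0 hq1 hr0 hr1) as Hk.
  set (kappa := Cnorm q + Cnorm (Csub Cone q) * r) in Hk.
  (* S_den does not vanish for |z_a| = r and |w| < r / κ, a disc containing C_r. *)
  assert (Hk_inv : r / kappa * kappa = r) by (field; lra).
  assert (Hdisc : 0 < r < r / kappa) by (split; nra).
  assert (Hden : forall za w, Cnorm za = r -> Cnorm w < r / kappa -> S_den q za w <> Czero).
  { intros za w Hza Hw. apply S_den_neq0. rewrite Hza. fold kappa. nra. }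
  pose proof (integral_integrand q _ r _ (inversions_strictly_upper sigma) Hdisc Hden n Cone) as H.
  eexists; split.
  - replace (fun z => Cmul (A_sigma n q sigma z) (Cprod (seq 0 n) (fun i => Cinv (z i))))
      with (fun z => Cmul Cone (integrand q (is_inversion sigma) n z))
      by (apply functional_extensionality; intros z; rewrite A_sigma_tri_prod; unfold integrand; ring).
    exact H.
  - rewrite tri_prod_inversions.
    transitivity (Cmul (Cmul (Cpow (Cinv two_pi_i) n) (Cpow two_pi_i n)) (Cpow q (inv_count n sigma)));
      [ring|].
    rewrite two_pi_i_pow_cancel. ring.
Qed.
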